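(* Let $G$ be a $d$-regular graph ($d>1$) and let $\sigma,\sigma'$ be two good signings of $G$ that are not equivalent. Define the signing $\tau$ of $G$ by $\tau(uv)=\sigma(uv)\sigma'(uv)$ for $uv\in E(G)$. Let $G'$ be the $2$-lift of $G$ determined by $\tau$: $V(G')=\bigcup_{v\in V(G)}\{v_0,v_1\}$, and for each $uv\in E(G)$, $G'$ contains the edges $u_0v_0,u_1v_1$ if $\tau(uv)=1$ and the edges $u_0v_1,u_1v_0$ if $\tau(uv)=-1$ (and no other edges). Define the signing $\phi$ of $G'$ by giving both edges of $G'$ lying over $uv\in E(G)$ the sign $\sigma'(uv)$. Then $\phi$ is a good signing of $G'$, i.e. every eigenvalue of the signed adjacency matrix $A^{\phi}$ has absolute value at most $2\sqrt{d-1}$.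
   Context: For an edge-signing $\sigma: E(H)\to\{-1,1\}$ of a graph $H$, the signed adjacency matrix $A^{\sigma}$ has $(i,j)$ entry $\sigma(ij)$ if $ij\in E(H)$ and $0$ otherwise. A good signing of a $d$-regular graph is a signing all of whose signed adjacency eigenvalues have absolute value at most $2\sqrt{d-1}$ (note $G'$ is again $d$-regular). Two signings $\sigma,\sigma'$ of $G$ are equivalent if there is a diagonal matrix $D$ with diagonal entries in $\{1,-1\}$ such that $DA^{\sigma}D=A^{\sigma'}$. *)

From HB Require Import structures.
From mathcomp Require Import all_boot all_order all_algebra.
Set Implicit Arguments. Unset Strict Implicit. Unset Printing Implicit Defensive.
Import Order.TTheory GRing.Theory Num.Theory.
Local Open Scope ring_scope.

Definition simple_graph (V : finType) (e : rel V) : Prop :=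
  symmetric e /\ irreflexive e.

Definition regular (V : finType) (e : rel V) (d : nat) : Prop :=
  forall v : V, #|[set u | e v u]| = d.

Definition signing (V : finType) (e : rel V) (s : V -> V -> int) : Prop :=
  forall u v, e u v -> s u v = s v u /\ (s u v = 1 \/ s u v = -1).

Definition signed_adj (R : ringType) (V : finType) (e : rel V)
    (s : V -> V -> int) : 'M[R]_#|V| :=
  \matrix_(i, j) (if e (enum_val i) (enum_val j)
                  then (s (enum_val i) (enum_val j))%:~R else 0).

Definition good_signing (R : rcfType) (V : finType) (e : rel V) (d : nat)
    (s : V -> V -> int) : Prop :=
  signing e s /\
  forall a : R, eigenvalue (signed_adj R e s) a ->
    `|a| <= 2 * Num.sqrt (d.-1)%:R.

Definition equiv_signing (R : ringType) (V : finType) (e : rel V)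
    (s s' : V -> V -> int) : Prop :=
  exists delta : V -> int,
    (forall v, delta v = 1 \/ delta v = -1) /\
    let D : 'M[R]_#|V| := diag_mx (\row_i (delta (enum_val i))%:~R) in
    D *m signed_adj R e s *m D = signed_adj R e s'.

Definition lift2 (V : finType) (e : rel V) (tau : V -> V -> int) : rel (V * bool) :=
  fun x y => e x.1 y.1 && ((tau x.1 y.1 == 1) == (x.2 == y.2)).

Definition lift_sign (V : finType) (s' : V -> V -> int) : V * bool -> V * bool -> int :=
  fun x y => s' x.1 y.1.

From HB Require Import structures.
From mathcomp Require Import all_boot all_order all_algebra.

Set Implicit Arguments.
Unset Strict Implicit.
Unset Printing Implicit Defensive.

Import Order.TTheory GRing.Theory Num.Theory.
Local Open Scope ring_scope.

(* If [f] is an eigenvector of the lift, then [u |-> f (u,true) + f (u,false)]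
   is an eigenvector of [A^sigma'] and [u |-> f (u,true) - f (u,false)] one of
   [A^sigma], for the same eigenvalue; as 2 is invertible they cannot both
   vanish.  Hence the spectrum of [A^phi] lies in the union of the spectra of
   the two good signings. *)

Lemma eigenvalue_enum_mxP (R : fieldType) (T : finType) (M : T -> T -> R) a :
  eigenvalue (\matrix_(i, j) M (enum_val i) (enum_val j) : 'M[R]_#|T|) a <->
  exists2 f : T -> R, (exists t, f t != 0) &
    forall w, \sum_u f u * M u w = a * f w.
Proof.
have sum_enum (f : T -> R) w :
    \sum_(i < #|T|) f (enum_val i) * M (enum_val i) w = \sum_u f u * M u w.
  rewrite (reindex enum_rank) /=; last exact: onW_bij (enum_rank_bij T).
  by under eq_bigr => u _ do rewrite enum_rankK.
split.
- case/eigenvalueP=> v /rowP vM v_neq0.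
  exists (fun t => v 0 (enum_rank t)).
  + have [j vj] : exists j, v 0 j != 0.
      apply/existsP; apply: contraR v_neq0 => /existsPn v0.
      by apply/eqP/rowP => j; rewrite mxE; apply/eqP/negbNE/v0.
    by exists (enum_val j); rewrite enum_valK.
  + move=> w; have := vM (enum_rank w); rewrite !mxE -sum_enum => <-.
    by apply: eq_bigr => i _; rewrite mxE enum_valK enum_rankK.
- case=> f [t ft] fM; apply/eigenvalueP; exists (\row_i f (enum_val i)).
  + apply/rowP => j; rewrite !mxE -fM -sum_enum.
    by apply: eq_bigr => i _; rewrite !mxE.
  + apply: contraNneq ft => /rowP/(_ (enum_rank t)).
    by rewrite !mxE enum_rankK => ->.
Qed.

Lemma sum_prod_bool (R : nmodType) (T : finType) (F : T * bool -> R) :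
  \sum_p F p = \sum_u (F (u, true) + F (u, false)).
Proof.
transitivity (\sum_u \sum_b F (u, b)).
  by rewrite pair_big; apply: eq_bigr => -[].
by apply: eq_bigr => u _; rewrite big_bool.
Qed.

Definition adj_entry {R : nzRingType} {V : finType} (e : rel V)
    (s : V -> V -> int) (u w : V) : R :=
  if e u w then (s u w)%:~R else 0.

Lemma signed_adjE (R : nzRingType) (V : finType) (e : rel V) (s : V -> V -> int) :
  signed_adj R e s = \matrix_(i, j) adj_entry e s (enum_val i) (enum_val j).
Proof. by []. Qed.

Lemma lift_signing (V : finType) (e : rel V) (tau s : V -> V -> int) :
  signing e s -> signing (lift2 e tau) (lift_sign s).
Proof. by move=> sS [u b] [w c] /andP[/= /sS]. Qed.

Section LiftSpectrum.

Variables (R : numFieldType) (V : finType) (e : rel V).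
Variables (sigma sigma' : V -> V -> int).
Hypotheses (sigmaS : signing e sigma) (sigma'S : signing e sigma').

Local Notation tau := (fun u v => sigma u v * sigma' u v).
Local Notation A := (@adj_entry R _ (lift2 e tau) (lift_sign sigma')).

Lemma lift_adj_entryD u b w :
  A (u, b) (w, true) + A (u, b) (w, false) = adj_entry e sigma' u w.
Proof.
rewrite /adj_entry /lift2 /lift_sign /=.
case: (e u w); last by rewrite addr0.
by case: b; case: (sigma u w * sigma' u w == 1); rewrite /= ?addr0 ?add0r.
Qed.

Lemma lift_adj_entryB u b w :
  A (u, b) (w, true) - A (u, b) (w, false) =
  if b then adj_entry e sigma u w else - adj_entry e sigma u w.
Proof.
rewrite /adj_entry /lift2 /lift_sign /=.
case euw: (e u w); last by rewrite subr0 oppr0; case: b.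
have [_ [] ->] := sigmaS euw; have [_ [] ->] := sigma'S euw;
  by case: b; rewrite /= ?subr0 ?sub0r ?mulrNz ?opprK.
Qed.

Variables (f : V * bool -> R) (a : R).
Hypothesis f_eigen : forall q, \sum_p f p * A p q = a * f q.

Lemma lift_eigen_sum w :
  \sum_u (f (u, true) + f (u, false)) * adj_entry e sigma' u w =
  a * (f (w, true) + f (w, false)).
Proof.
rewrite mulrDr -!f_eigen -big_split sum_prod_bool /=.
by apply: eq_bigr => u _; rewrite -!mulrDr !lift_adj_entryD mulrDl.
Qed.

Lemma lift_eigen_diff w :
  \sum_u (f (u, true) - f (u, false)) * adj_entry e sigma u w =
  a * (f (w, true) - f (w, false)).
Proof.
rewrite mulrBr -!f_eigen -sumrB sum_prod_bool /=.
by apply: eq_bigr => u _; rewrite -!mulrBr !lift_adj_entryB mulrN mulrBl.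
Qed.

End LiftSpectrum.

Lemma lift_eigenvalue (R : numFieldType) (V : finType) (e : rel V)
    (sigma sigma' : V -> V -> int) (a : R) :
  signing e sigma -> signing e sigma' ->
  eigenvalue (signed_adj R (lift2 e (fun u v => sigma u v * sigma' u v))
                (lift_sign sigma')) a ->
  eigenvalue (signed_adj R e sigma') a \/ eigenvalue (signed_adj R e sigma) a.
Proof.
move=> sigmaS sigma'S; rewrite !signed_adjE.
case/eigenvalue_enum_mxP => f [[u0 b0] fu0_neq0] f_eigen.
have [/existsP [t sum_neq0] | /existsPn sum0] :=
  boolP [exists t, f (t, true) + f (t, false) != 0].
  left; apply/eigenvalue_enum_mxP.
  exists (fun u => f (u, true) + f (u, false)); first by exists t.
  exact: lift_eigen_sum f_eigen.
right; apply/eigenvalue_enum_mxP.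
exists (fun u => f (u, true) - f (u, false));
  last exact: (lift_eigen_diff sigmaS sigma'S f_eigen).
exists u0; apply: contra fu0_neq0; rewrite subr_eq0 => /eqP f_eq.
have := sum0 u0; rewrite negbK f_eq -mulr2n mulrn_eq0 /= => /eqP f0.
by case: b0; rewrite ?f_eq f0.
Qed.

Theorem mainTheorem5 (R : rcfType) (V : finType) (e : rel V) (d : nat)
    (sigma sigma' : V -> V -> int) :
  simple_graph e -> regular e d -> (1 < d)%N ->
  good_signing R e d sigma -> good_signing R e d sigma' ->
  ~ equiv_signing R e sigma sigma' ->
  good_signing R (lift2 e (fun u v => sigma u v * sigma' u v)) d
    (lift_sign sigma').
Proof.
move=> _ _ _ [sigmaS sigma_good] [sigma'S sigma'_good] _.
split; first exact: lift_signing.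
by move=> a /lift_eigenvalue-/(_ sigmaS sigma'S) [/sigma'_good | /sigma_good].
Qed.
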